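(* Under Assumption A(b),(c) in setting (E), let $\omega\in(0,1]$, set $\widetilde S^{-1}:=Gx^0$ and for $k\ge0$ $$\widetilde S^k:=(1-\omega)\big[\widetilde S^{k-1}+2G_{\mathcal B_k}x^k-3G_{\mathcal B_k}x^{k-1}+G_{\mathcal B_k}x^{k-2}\big]+\omega\,\overline S^k_{\hat{\mathcal B}_k},$$ where $\mathcal B_k$ is a fresh i.i.d. mini-batch of size $b$, $\hat{\mathcal B}_k$ a fresh i.i.d. mini-batch of size $\hat b$ (possibly overlapping with $\mathcal B_k$), and $\overline S^k_{\hat{\mathcal B}_k}$ is built from $\hat{\mathcal B}_k$ with $\mathbb E_{\hat{\mathcal B}_k}[\overline S^k_{\hat{\mathcal B}_k}]=S^k$ and $\sigma_k^2:=\mathbb E_{\hat{\mathcal B}_k}\|\overline S^k_{\hat{\mathcal B}_k}-S^k\|^2$. Then $\widetilde S^k$ belongs to class (B) with $\Delta_k:=\|\widetilde S^k-S^k\|^2$, $\tau=\omega$, $\kappa=\omega(2-\omega)$, $\Theta=\frac{8C(1-\omega)^2L^2}{b}$, $\hat\Theta=\frac{2C(1-\omega)^2L^2}{b}$, $\delta_k=C\omega^2\sigma_k^2$, where $C=1$ if $\mathcal B_k$ and $\hat{\mathcal B}_k$ are independent and $C=2$ otherwise.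
   Context: Setting: $G:\mathbb{R}^p\to\mathbb{R}^p$, $T:\mathbb{R}^p\rightrightarrows\mathbb{R}^p$, $\Phi:=G+T$, $J_{\eta T}:=(\mathbb{I}+\eta T)^{-1}$. (E): $Gx=\mathbb{E}_{\zeta\sim\mathbb P}[\mathbf G(x,\zeta)]$. $G_{\mathcal B}x:=\frac1{|\mathcal B|}\sum_{\zeta\in\mathcal B}\mathbf G(x,\zeta)$; i.i.d. mini-batches are samples drawn i.i.d. from $\mathbb P$ independently of the past. Assumption A: (b) $\mathbb{E}_\zeta\|\mathbf G(x,\zeta)-Gx\|^2\le\sigma^2$; (c) $\mathbb{E}_\zeta\|\mathbf G(x,\zeta)-\mathbf G(y,\zeta)\|^2\le L^2\|x-y\|^2$. Scheme (VrFRBS): stepsize $\eta>0$, $x^0$, $x^{-2}=x^{-1}=x^0$, $\xi^0\in Tx^0$; for $k\ge0$: $S^k:=2Gx^k-Gx^{k-1}$, estimator $\widetilde S^k$, $x^{k+1}\in J_{\eta T}(x^k-\eta\widetilde S^k)$, $\xi^{k+1}:=\eta^{-1}(x^k-\eta\widetilde S^k-x^{k+1})\in Tx^{k+1}$; $e^k:=\widetilde S^k-S^k$. $\mathcal F_k$: $\sigma$-algebra of all randomness up to iteration $k$; $\mathbb E_k[\cdot]:=\mathbb E[\cdot\mid\mathcal F_k]$. Class (B): there exist nonnegative random variables $\Delta_k$ ($\Delta_{-1}:=0$), $\tau,\kappa\in(0,1]$, $\Theta,\hat\Theta\ge0$, nonnegative $\{\delta_k\}$ such that with $e^{-1}:=0$,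 a.s. for all $k\ge0$: $\mathbb E_k[e^k]=(1-\tau)e^{k-1}$; $\mathbb E_k\|e^k\|^2\le\mathbb E_k[\Delta_k]$; $\mathbb E_k[\Delta_k]\le(1-\kappa)\Delta_{k-1}+\Theta\|x^k-x^{k-1}\|^2+\hat\Theta\|x^{k-1}-x^{k-2}\|^2+\delta_k$. *)

From HB Require Import structures.
From mathcomp Require Import all_boot all_order all_algebra.
From mathcomp Require Import all_classical all_reals all_analysis.

Set Implicit Arguments.
Unset Strict Implicit.
Unset Printing Implicit Defensive.

Import Order.TTheory GRing.Theory Num.Theory.
Local Open Scope classical_set_scope.
Local Open Scope ring_scope.

Definition sqnorm (R : realType) (p : nat) (v : 'rV[R]_p) : R :=
  \sum_(i < p) (v ord0 i) ^+ 2.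

Definition GB (R : realType) (p : nat) (Z : Type) (b : nat)
  (Gs : 'rV[R]_p -> Z -> 'rV[R]_p) (B : 'I_b -> Z) (x : 'rV[R]_p) : 'rV[R]_p :=
  (b%:R)^-1 *: \sum_(j < b) Gs x (B j).

(** membership y \in J_{eta T}(z) = (I + eta T)^{-1}(z) *)
Definition in_resolvent (R : realType) (p : nat) (eta : R)
  (T : 'rV[R]_p -> set 'rV[R]_p) (z y : 'rV[R]_p) : Prop :=
  exists t, T y t /\ z = y + eta *: t.

(** zeta : 'I_n -> W -> Z is an i.i.d. sample of size n with law P under Q:
    every sample is measurable and the joint law of (zeta_0,..,zeta_{n-1})
    is the product law P^{(x) n} (equality on measurable rectangles). *)
Definition iid_batch (R : realType) (dW dZ : measure_display)
  (W : measurableType dW) (Z : measurableType dZ)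
  (Q : probability W R) (P : probability Z R) (n : nat)
  (zeta : 'I_n -> W -> Z) : Prop :=
  (forall j, measurable_fun setT (zeta j)) /\
  forall A : 'I_n -> set Z, (forall j, measurable (A j)) ->
    Q (\bigcap_(j in [set: 'I_n]) (zeta j @^-1` A j)) = (\prod_(j < n) P (A j))%E.

Definition gen_sigma (dZ : measure_display) (W : Type) (Z : measurableType dZ)
  (n : nat) (zeta : 'I_n -> W -> Z) : set (set W) :=
  <<s \bigcup_(j in [set: 'I_n]) preimage_set_system setT (zeta j) measurable >>.

Definition measurable_wrt (R : realType) (W : Type) (F : set (set W)) (f : W -> R)
  : Prop :=
  forall V : set R, measurable V -> F (f @^-1` V).

Definition indep_sigma (R : realType) (dW : measure_display) (W : measurableType dW)
  (Q : probability W R) (F1 F2 : set (set W)) : Prop :=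
  forall A B, F1 A -> F2 B -> Q (A `&` B) = (Q A * Q B)%E.

(* Histories: a run is a sequence h : nat -> W of fresh randomness,    *)
(* h k being the randomness drawn at iteration k (batches B_k, ^B_k).  *)
(* F_k = sigma(h 0, ..., h (k-1)).                                      *)

(** f is F_k-measurable, i.e. depends only on h 0, ..., h (k-1) *)
Definition adapted_at (W T : Type) (k : nat) (f : (nat -> W) -> T) : Prop :=
  forall h h', (forall j, (j < k)%N -> h j = h' j) -> f h = f h'.

Definition upd (W : Type) (h : nat -> W) (k : nat) (w : W) : nat -> W :=
  fun j => if j == k then w else h j.

(** E_k for real random variables: integrate the fresh randomness of
    iteration k (law Q, independent of F_k) with the past frozen. *)
Definition Ek (R : realType) (dW : measure_display) (W : measurableType dW)
  (Q : probability W R) (k : nat) (Y : (nat -> W) -> R) (h : nat -> W) : R :=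
  Rintegral Q setT (fun w => Y (upd h k w)).

Definition Ek_nn (R : realType) (dW : measure_display) (W : measurableType dW)
  (Q : probability W R) (k : nat) (Y : (nat -> W) -> R) (h : nat -> W) : \bar R :=
  (\int[Q]_w (Y (upd h k w))%:E)%E.

(* x k = x^k; x (k.-1) = x^{k-1} and x (k.-2) = x^{k-2} with the       *)
(* convention x^{-1} = x^{-2} = x^0 (truncated subtraction on nat).    *)

Definition Sk (R : realType) (p : nat) (W : Type) (G : 'rV[R]_p -> 'rV[R]_p)
  (x : nat -> (nat -> W) -> 'rV[R]_p) (k : nat) (h : nat -> W) : 'rV[R]_p :=
  2%:R *: G (x k h) - G (x k.-1 h).

(** ~S^k, with ~S^{-1} = G x^0 and
    ~S^k = (1-om)[~S^{k-1} + 2 G_{B_k} x^k - 3 G_{B_k} x^{k-1} + G_{B_k} x^{k-2}]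
           + om Sbar^k,
    where B_k = zeta (h k) and Sbar k h = Sbar^k_{^B_k}. *)
Fixpoint Stil (R : realType) (p : nat) (dZ : measure_display) (W : Type)
  (Z : measurableType dZ) (b : nat)
  (Gs : 'rV[R]_p -> Z -> 'rV[R]_p) (G : 'rV[R]_p -> 'rV[R]_p)
  (om : R) (zeta : 'I_b -> W -> Z) (Sbar : nat -> (nat -> W) -> 'rV[R]_p)
  (x : nat -> (nat -> W) -> 'rV[R]_p) (k : nat) (h : nat -> W) : 'rV[R]_p :=
  let prev := match k with
              | 0 => G (x 0%N h)
              | k'.+1 => Stil Gs G om zeta Sbar x k' h
              end in
  let B := fun j => zeta j (h k) in
  (1 - om) *: (prev + 2%:R *: GB Gs B (x k h) - 3%:R *: GB Gs B (x k.-1 h)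
               + GB Gs B (x k.-2 h))
  + om *: Sbar k h.

From HB Require Import structures.
From mathcomp Require Import all_boot all_order all_algebra.
From mathcomp Require Import all_classical all_reals all_analysis.
From mathcomp Require Import measurable_realfun.
From mathcomp Require Import ring lra.
Import Order.TTheory GRing.Theory Num.Theory.
Local Open Scope classical_set_scope.
Local Open Scope ring_scope.

(* Given the past, the fresh error splits as e^k = (1 - w) e^{k-1} + X + Y,
   where X = (1 - w)/b sum_{z in B_k} psi(z) is a sum of i.i.d. centred terms
     psi(z) = 2 (G(x^k, z) - G x^k) - 3 (G(x^{k-1}, z) - G x^{k-1})
              + (G(x^{k-2}, z) - G x^{k-2})
   and Y = w (Sbar^k - S^k) is centred too; taking E_k gives E_k e^k = (1 - w) e^{k-1}.
   For the second moment, E_k |c + X + Y|^2 <= |c|^2 + C (E_k |X|^2 + E_k |Y|^2):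
   the cross term vanishes when B_k and ^B_k are independent (C = 1) and is
   absorbed by Young's inequality otherwise (C = 2).  Independence of the samples
   kills the off-diagonal terms of E_k |X|^2, and writing psi = 2 (A - E A) - (B - E B)
   with A, B increments of G(., z) gives E psi^2 <= 8 E A^2 + 2 E B^2, which A(c)
   bounds by L^2 (8 |x^k - x^{k-1}|^2 + 2 |x^{k-1} - x^{k-2}|^2).  Finally
   (1 - w)^2 = 1 - w (2 - w). *)

Section independent_product.
Local Open Scope ereal_scope.
Context {d} {W : measurableType d} {R : realType} {Q : probability W R}.
Context {f g : W -> R}.
Hypotheses (mf : measurable_fun setT f) (mg : measurable_fun setT g).
Hypothesis fg_indep : forall A B : set R, measurable A -> measurable B ->
  Q (f @^-1` A `&` g @^-1` B) = Q (f @^-1` A) * Q (g @^-1` B).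
Hypotheses (intf : Q.-integrable setT (EFin \o f))
           (intg : Q.-integrable setT (EFin \o g)).

Let Fm : {mfun W >-> R} := HB.pack f (isMeasurableFun.Build _ _ _ _ f mf).
Let Gm : {mfun W >-> R} := HB.pack g (isMeasurableFun.Build _ _ _ _ g mg).
Let H := fun w => (f w, g w).
Let mH : measurable_fun setT H := measurable_fun_pair mf mg.
Let Hm : {mfun W >-> (R * R)%type} := HB.pack H (isMeasurableFun.Build _ _ _ _ H mH).
Let muf := distribution Q Fm.
Let mug := distribution Q Gm.
Let muH := distribution Q Hm.

Let joint_law_prod X : measurable X -> (muf \x mug) X = muH X.
Proof.
apply: product_measure_unique => A B mA mB.
by rewrite /muH /muf /mug /distribution /pushforward /= -fg_indep.
Qed.

Let phi2 := fun z : (R * R)%type => (z.1 * z.2)%R.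
Let phi := EFin \o phi2.
Let mphi : measurable_fun setT phi.
Proof.
apply/measurable_EFinP; apply: measurable_funM;
  [exact: measurable_fst | exact: measurable_snd].
Qed.

Let integrable_law (F : {mfun W >-> R}) : Q.-integrable setT (EFin \o F) ->
  (distribution Q F).-integrable setT EFin.
Proof.
move=> /integrableP[_ hF]; apply/integrableP; split.
  by apply/measurable_EFinP; exact: measurable_id.
have mab : measurable_fun [set: R] (fun x : R => `|x%:E|) by apply: measurableT_comp.
by rewrite (ge0_integral_distribution F mab).
Qed.

Lemma integral_abse_mul_indep : \int[Q]_w `|(f w * g w)%:E| =
  \int[Q]_w `|(f w)%:E| * \int[Q]_w `|(g w)%:E|.
Proof.
have mphia : measurable_fun setT (abse \o phi) by apply: measurableT_comp.
transitivity (\int[muH]_z (abse \o phi) z).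
  by rewrite (ge0_integral_distribution Hm mphia) // => y; exact: abse_ge0.
rewrite (eq_measure_integral (muf \x mug)); last first.
  by move=> A mA _; exact/esym/joint_law_prod.
rewrite fubini_tonelli1 //; last by move=> z; exact: abse_ge0.
rewrite /fubini_F /=.
transitivity (\int[muf]_x (`|x%:E| * \int[mug]_y `|y%:E|)).
  apply: eq_integral => x _.
  rewrite -ge0_integralZl //=; last by apply: measurableT_comp.
  by apply: eq_integral => y _; rewrite /phi2 /= normrM EFinM.
rewrite ge0_integralZr //=; last 2 first.
- by apply: measurableT_comp.
- by apply: integral_ge0.
have mab : measurable_fun [set: R] (fun x : R => `|x%:E|) by apply: measurableT_comp.
by rewrite (ge0_integral_distribution Fm mab) // (ge0_integral_distribution Gm mab).
Qed.

Lemma integrable_mul_indep : Q.-integrable setT (EFin \o (f \* g)%R).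
Proof.
apply/integrableP; split.
  by apply/measurable_EFinP; exact: measurable_funM.
move: intf intg => /integrableP[_ hf] /integrableP[_ hg].
rewrite /comp /= integral_abse_mul_indep.
by apply: lte_mul_pinfty => //;
  [exact: integral_ge0 | rewrite ge0_fin_numE //; exact: integral_ge0].
Qed.

Lemma integral_mul_indep : \int[Q]_w (f w * g w)%:E =
  \int[Q]_w (f w)%:E * \int[Q]_w (g w)%:E.
Proof.
have phiint : (muf \x mug).-integrable setT phi.
  apply/integrableP; split => //.
  have mphia : measurable_fun setT (abse \o phi) by apply: measurableT_comp.
  rewrite (eq_measure_integral muH); last by move=> A mA _; exact: joint_law_prod.
  rewrite (ge0_integral_distribution Hm mphia) //; last by move=> y; exact: abse_ge0.
  by case/integrableP: integrable_mul_indep.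
transitivity (\int[muH]_z phi z).
  by rewrite (integral_distribution (X := Hm)) //; exact: integrable_mul_indep.
rewrite (eq_measure_integral (muf \x mug)); last first.
  by move=> A mA _; exact/esym/joint_law_prod.
rewrite -(integral12_prod_meas1 phiint) /fubini_F /=.
transitivity (\int[muf]_x (x%:E * \int[mug]_y y%:E)).
  congr (integral _ _ _); apply: funext => x.
  by rewrite -integralZl //; exact: integrable_law.
have cfin : (\int[mug]_y y%:E) \is a fin_num.
  exact: (integrable_fin_num measurableT (@integrable_law Gm intg)).
rewrite -(fineK cfin) integralZr //; last exact: (@integrable_law Fm intf).
rewrite fineK // (integral_distribution (X := Fm)) //.
by rewrite (integral_distribution (X := Gm)).
Qed.

End independent_product.

Section iid_batch_theory.
Local Open Scope ereal_scope.
Context {dW} {W : measurableType dW} {dZ} {Z : measurableType dZ} {R : realType}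
  {Q : probability W R} {P : probability Z R} {n : nat} {zeta : 'I_n -> W -> Z}
  (hz : iid_batch Q P zeta).

Lemma iid_batch_measurable j : measurable_fun setT (zeta j).
Proof. exact: hz.1. Qed.

Lemma iid_batch_law j A : measurable A -> Q (zeta j @^-1` A) = P A.
Proof.
move=> mA.
have := hz.2 (fun l => if l == j then A else setT).
rewrite (_ : \bigcap_(l in _) _ = zeta j @^-1` A); last first.
  apply/seteqP; split => [w /= Hw|w /= Hw l _ /=].
    by have := Hw j I; rewrite eqxx.
  by case: ifPn => // /eqP ->.
rewrite (bigD1 j) //= eqxx big1 ?mule1; last first.
  by move=> l /negbTE ->; exact: probability_setT.
by apply => l; case: ifPn.
Qed.

Lemma iid_batch_law2 j l A B : j != l -> measurable A -> measurable B ->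
  Q (zeta j @^-1` A `&` zeta l @^-1` B) = P A * P B.
Proof.
move=> jl mA mB.
have := hz.2 (fun m => if m == j then A else if m == l then B else setT).
rewrite (_ : \bigcap_(m in _) _ = zeta j @^-1` A `&` zeta l @^-1` B); last first.
  apply/seteqP; split => [w /= Hw|w /= [Hw1 Hw2] m _ /=].
    split; first by have := Hw j I; rewrite eqxx.
    by have := Hw l I; rewrite eq_sym (negbTE jl) eqxx.
  by case: ifPn => [/eqP -> //|_]; case: ifPn => // /eqP ->.
rewrite (bigD1 j) //= eqxx (bigD1 l) //=; last by rewrite eq_sym.
rewrite eq_sym (negbTE jl) eqxx big1 ?mule1; last first.
  by move=> m /andP[/negbTE -> /negbTE ->]; exact: probability_setT.
by apply => m; case: ifPn => // _; case: ifPn.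
Qed.

Let Zm j : {mfun W >-> Z} :=
  HB.pack (zeta j) (isMeasurableFun.Build _ _ _ _ (zeta j) (iid_batch_measurable j)).

Let distributionE j A : measurable A -> distribution Q (Zm j) A = P A.
Proof. by move=> mA; rewrite /distribution /pushforward /= iid_batch_law. Qed.

Lemma ge0_integral_iid j {psi : Z -> \bar R} : measurable_fun setT psi ->
  (forall z, 0 <= psi z) -> \int[Q]_w psi (zeta j w) = \int[P]_z psi z.
Proof.
move=> mpsi psi0.
rewrite -[LHS](ge0_integral_distribution (Zm j)) //.
by apply: eq_measure_integral => A mA _; exact: distributionE.
Qed.

Lemma integral_iid j {phi : Z -> R} : measurable_fun setT phi ->
  P.-integrable setT (EFin \o phi) ->
  Q.-integrable setT (EFin \o (phi \o zeta j)) /\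
  \int[Q]_w (phi (zeta j w))%:E = \int[P]_z (phi z)%:E.
Proof.
move=> mphi /integrableP[_ hp].
have iQ : Q.-integrable setT (EFin \o (phi \o zeta j)).
  apply/integrableP; split.
    apply/measurable_EFinP; apply: measurableT_comp => //.
    exact: iid_batch_measurable.
  rewrite (@ge0_integral_iid j (fun z => `|(phi z)%:E|)) //.
  by apply: measurableT_comp => //; apply/measurable_EFinP.
split => //.
transitivity (\int[distribution Q (Zm j)]_z (phi z)%:E).
  by rewrite (integral_distribution (X := Zm j)) //; exact/measurable_EFinP.
by apply: eq_measure_integral => A mA _; exact: distributionE.
Qed.

Lemma integral_mul_iid j l {phi psi : Z -> R} : j != l ->
  measurable_fun setT phi -> measurable_fun setT psi ->
  P.-integrable setT (EFin \o phi) -> P.-integrable setT (EFin \o psi) ->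
  Q.-integrable setT (EFin \o ((phi \o zeta j) \* (psi \o zeta l))%R) /\
  \int[Q]_w (phi (zeta j w) * psi (zeta l w))%:E =
  \int[P]_z (phi z)%:E * \int[P]_z (psi z)%:E.
Proof.
move=> jl mphi mpsi iphi ipsi.
have [i1 e1] := integral_iid j mphi iphi.
have [i2 e2] := integral_iid l mpsi ipsi.
have m1 : measurable_fun setT (phi \o zeta j).
  by apply: measurableT_comp => //; exact: iid_batch_measurable.
have m2 : measurable_fun setT (psi \o zeta l).
  by apply: measurableT_comp => //; exact: iid_batch_measurable.
have indep : forall A B : set R, measurable A -> measurable B ->
    Q ((phi \o zeta j) @^-1` A `&` (psi \o zeta l) @^-1` B) =
    Q ((phi \o zeta j) @^-1` A) * Q ((psi \o zeta l) @^-1` B).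
  move=> A B mA mB.
  have mA' : measurable (phi @^-1` A) by rewrite -[_ @^-1` _]setTI; exact: mphi.
  have mB' : measurable (psi @^-1` B) by rewrite -[_ @^-1` _]setTI; exact: mpsi.
  change (Q (zeta j @^-1` (phi @^-1` A) `&` zeta l @^-1` (psi @^-1` B)) =
    Q (zeta j @^-1` (phi @^-1` A)) * Q (zeta l @^-1` (psi @^-1` B))).
  by rewrite iid_batch_law2 // !iid_batch_law.
split; first exact: (integrable_mul_indep m1 m2 indep i1 i2).
by rewrite (integral_mul_indep m1 m2 indep i1 i2) e1 e2.
Qed.

End iid_batch_theory.

Section real_integral.
Context {d} {W : measurableType d} {R : realType} {Q : probability W R}.
Implicit Types f g : W -> R.

Definition Rintegrable (f : W -> R) := Q.-integrable setT (EFin \o f).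
Definition mean (f : W -> R) := \int[Q]_w f w.

Lemma Rintegrable_measurable {f} : Rintegrable f -> measurable_fun setT f.
Proof. by case/integrableP => /measurable_EFinP. Qed.

Let eq_integrableT {F G : W -> \bar R} : Q.-integrable setT F ->
  (forall w, F w = G w) -> Q.-integrable setT G.
Proof. by move=> hF FG; apply: (eq_integrable _ F) => // w _; rewrite FG. Qed.

Lemma eq_Rintegrable {f g} : (forall w, f w = g w) -> Rintegrable f -> Rintegrable g.
Proof. by move=> fg hf; apply: (eq_integrableT hf) => w; rewrite /= fg. Qed.

Lemma eq_mean {f} g : (forall w, f w = g w) -> mean f = mean g.
Proof. by move=> fg; apply: eq_Rintegral => w _; rewrite fg. Qed.

Lemma RintegrableD {f g} : Rintegrable f -> Rintegrable g ->
  Rintegrable (fun w => f w + g w).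
Proof.
move=> hf hg; apply: (eq_integrableT (integrableD measurableT hf hg)) => w.
by rewrite /= EFinD.
Qed.

Lemma RintegrableZl k {f} : Rintegrable f -> Rintegrable (fun w => k * f w).
Proof.
move=> hf; apply: (eq_integrableT (integrableZl measurableT k hf)) => w.
by rewrite /= EFinM.
Qed.

Lemma Rintegrable_cst k : Rintegrable (fun _ => k).
Proof. exact: finite_measure_integrable_cst. Qed.

Lemma RintegrableB {f g} : Rintegrable f -> Rintegrable g ->
  Rintegrable (fun w => f w - g w).
Proof.
move=> hf hg; have hNg : Rintegrable (fun w => - g w).
  by apply: (eq_Rintegrable _ (RintegrableZl (-1) hg)) => w; rewrite mulN1r.
exact: RintegrableD.
Qed.

Lemma meanD {f g} : Rintegrable f -> Rintegrable g ->
  mean (fun w => f w + g w) = mean f + mean g.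
Proof. exact: RintegralD. Qed.

Lemma meanZl k {f} : Rintegrable f -> mean (fun w => k * f w) = k * mean f.
Proof. exact: RintegralZl. Qed.

Lemma meanB {f g} : Rintegrable f -> Rintegrable g ->
  mean (fun w => f w - g w) = mean f - mean g.
Proof. exact: RintegralB. Qed.

Lemma mean_cst k : mean (fun _ => k) = k.
Proof.
rewrite /mean Rintegral_cst // [fine _](_ : _ = 1) ?mulr1 //.
exact: (congr1 fine (probability_setT Q)).
Qed.

Lemma integral_EFin_mean {f} : Rintegrable f -> (\int[Q]_w (f w)%:E)%E = (mean f)%:E.
Proof. by move=> hf; rewrite /mean /Rintegral fineK //; exact: integrable_fin_num. Qed.

Lemma Rintegrable_mean_sum {I : Type} (s : seq I) (h : I -> W -> R) :
  (forall i, Rintegrable (h i)) ->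
  Rintegrable (fun w => \sum_(i <- s) h i w) /\
  mean (fun w => \sum_(i <- s) h i w) = \sum_(i <- s) mean (h i).
Proof.
move=> hh; elim: s => [|i s [ih1 ih2]].
  split; first by apply: (eq_Rintegrable _ (Rintegrable_cst 0)) => w; rewrite big_nil.
  by rewrite (eq_mean (fun _ => 0)) ?mean_cst ?big_nil // => w; rewrite big_nil.
split; first by apply: (eq_Rintegrable _ (RintegrableD (hh i) ih1)) => w; rewrite big_cons.
rewrite (eq_mean (fun w => h i w + \sum_(j <- s) h j w)); last by move=> w; rewrite big_cons.
by rewrite meanD // ih2 big_cons.
Qed.

Lemma ge0_Rintegrable f : measurable_fun setT f -> (forall w, 0 <= f w) ->
  (\int[Q]_w (f w)%:E < +oo)%E -> Rintegrable f.
Proof.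
move=> mf f0 fin; apply/integrableP; split; first exact/measurable_EFinP.
apply: le_lt_trans fin; apply: ge0_le_integral => //.
- by apply: measurableT_comp => //; exact/measurable_EFinP.
- exact/measurable_EFinP.
- by move=> w _; rewrite /comp abse_EFin lee_fin ger0_norm.
Qed.

Lemma le_Rintegrable {f g} : measurable_fun setT f -> (forall w, `|f w| <= g w) ->
  Rintegrable g -> Rintegrable f.
Proof.
move=> mf fg hg; apply: (le_integrable measurableT (g := EFin \o g)) => //.
- exact/measurable_EFinP.
- by move=> w _; rewrite /comp !abse_EFin lee_fin (le_trans (fg w)) // ler_norm.
Qed.

End real_integral.
Arguments Rintegrable {d W R} Q f.
Arguments mean {d W R} Q f.

Ltac solve_Rintegrable :=
  repeat first [ assumption | apply: RintegrableD | apply: RintegrableZl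
               | apply: Rintegrable_cst ].

Section second_moments.
Context {d} {W : measurableType d} {R : realType} {Q : probability W R}.

Lemma mean_sqr_centered_le {A : W -> R} :
  Rintegrable Q A -> Rintegrable Q (fun w => A w ^+ 2) ->
  Rintegrable Q (fun w => (A w - mean Q A) ^+ 2) /\
  mean Q (fun w => (A w - mean Q A) ^+ 2) <= mean Q (fun w => A w ^+ 2).
Proof.
move=> iA iA2; set m := mean Q A.
have sqrE w : (A w - m) ^+ 2 = A w ^+ 2 + (-2 * m) * A w + m ^+ 2 by ring.
have iB : Rintegrable Q (fun w => A w ^+ 2 + (-2 * m) * A w + m ^+ 2).
  by solve_Rintegrable.
split; first by apply: (eq_Rintegrable _ iB) => w; rewrite sqrE.
rewrite (eq_mean _ sqrE) !meanD; try solve_Rintegrable.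
by rewrite meanZl // mean_cst -/m; nra.
Qed.

(* With independence the cross term E[XY] vanishes; otherwise Young's
   inequality (X + Y)^2 <= 2 X^2 + 2 Y^2 costs the factor C = 2. *)
Lemma mean_sqr_add_centered_le (c C : R) (X Y : W -> R) :
  Rintegrable Q X -> Rintegrable Q (fun w => X w ^+ 2) -> mean Q X = 0 ->
  Rintegrable Q Y -> mean Q Y = 0 ->
  (C = 1 /\ (forall A B : set R, measurable A -> measurable B ->
     Q (X @^-1` A `&` Y @^-1` B) = (Q (X @^-1` A) * Q (Y @^-1` B))%E)) \/ C = 2 ->
  (\int[Q]_w ((c + X w + Y w) ^+ 2)%:E <=
   (c ^+ 2 + C * mean Q (fun w => X w ^+ 2))%:E + C%:E * \int[Q]_w ((Y w) ^+ 2)%:E)%E.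
Proof.
move=> iX iX2 EX iY EY hC.
have C0 : 0 < C by case: hC => [[-> _]|->].
have mX := Rintegrable_measurable iX; have mY := Rintegrable_measurable iY.
have mY2 : measurable_fun setT (fun w => Y w ^+ 2) by exact: measurable_funX.
have [Yfin|] := ltP (\int[Q]_w ((Y w) ^+ 2)%:E)%E +oo%E; last first.
  rewrite leye_eq => /eqP ->.
  by rewrite mulry gtr0_sg // mul1e addey // leey.
have iY2 : Rintegrable Q (fun w => Y w ^+ 2).
  by apply: ge0_Rintegrable => // w; exact: sqr_ge0.
rewrite (integral_EFin_mean iY2).
have me : measurable_fun setT (fun w => (c + X w + Y w) ^+ 2).
  apply: measurable_funX; apply: measurable_funD => //.
  by apply: measurable_funD => //; exact: measurable_cst.
case: hC => [[-> indep]|->].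
- have iXY : Rintegrable Q (fun w => X w * Y w).
    exact: (integrable_mul_indep mX mY indep iX iY).
  have EXY : mean Q (fun w => X w * Y w) = 0.
    have := integral_mul_indep mX mY indep iX iY.
    rewrite (integral_EFin_mean iXY) (integral_EFin_mean iX) EX mul0e => /eqP.
    by rewrite eqe => /eqP.
  pose H w := c ^+ 2 + 2 * c * X w + 2 * c * Y w + X w ^+ 2 + Y w ^+ 2
    + 2 * (X w * Y w).
  have iH : Rintegrable Q H by rewrite /H; solve_Rintegrable.
  rewrite (eq_integral (fun w => (H w)%:E)); last first.
    by move=> w _; rewrite /H; congr EFin; ring.
  rewrite (integral_EFin_mean iH) mul1r mul1e -EFinD lee_fin.
  rewrite /H !meanD; try solve_Rintegrable.
  by rewrite !meanZl; try solve_Rintegrable; rewrite !mean_cst EX EY EXY; lra.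
- pose H w := c ^+ 2 + 2 * c * X w + 2 * c * Y w + 2 * X w ^+ 2 + 2 * Y w ^+ 2.
  have iH : Rintegrable Q H by rewrite /H; solve_Rintegrable.
  apply: (@le_trans _ _ (\int[Q]_w (H w)%:E)%E).
    apply: ge0_le_integral => //.
    - by move=> w _; rewrite lee_fin sqr_ge0.
    - exact/measurable_EFinP.
    - by apply/measurable_EFinP; exact: (Rintegrable_measurable iH).
    - move=> w _; rewrite lee_fin /H -subr_ge0.
      have -> : c ^+ 2 + 2 * c * X w + 2 * c * Y w + 2 * X w ^+ 2 + 2 * Y w ^+ 2 -
        (c + X w + Y w) ^+ 2 = (X w - Y w) ^+ 2 by ring.
      exact: sqr_ge0.
  rewrite (integral_EFin_mean iH) -EFinM -EFinD lee_fin.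
  rewrite /H !meanD; try solve_Rintegrable.
  by rewrite !meanZl; try solve_Rintegrable; rewrite !mean_cst EX EY; lra.
Qed.

End second_moments.

Section iid_centered_sum.
Context {dW} {W : measurableType dW} {dZ} {Z : measurableType dZ} {R : realType}
  {Q : probability W R} {P : probability Z R} {n : nat} {zeta : 'I_n -> W -> Z}
  (hz : iid_batch Q P zeta).

(* Only the diagonal terms of the square of the sum survive. *)
Lemma iid_centered_sum_moments {phi : Z -> R} : measurable_fun setT phi ->
  Rintegrable P phi -> Rintegrable P (fun z => phi z ^+ 2) -> mean P phi = 0 ->
  [/\ Rintegrable Q (fun w => \sum_(j < n) phi (zeta j w)),
      mean Q (fun w => \sum_(j < n) phi (zeta j w)) = 0,
      Rintegrable Q (fun w => (\sum_(j < n) phi (zeta j w)) ^+ 2) &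
      mean Q (fun w => (\sum_(j < n) phi (zeta j w)) ^+ 2) =
        n%:R * mean P (fun z => phi z ^+ 2)].
Proof.
move=> mphi iphi iphi2 Ephi.
have Ephi' : (\int[P]_z (phi z)%:E = 0)%E by rewrite (integral_EFin_mean iphi) Ephi.
have mphi2 : measurable_fun setT (fun z => phi z ^+ 2) by exact: measurable_funX.
have term j : Rintegrable Q (fun w => phi (zeta j w)) /\
    mean Q (fun w => phi (zeta j w)) = 0.
  have [i e] := integral_iid hz j mphi iphi.
  by split => //; rewrite /mean /Rintegral e Ephi'.
have [iX EX] := Rintegrable_mean_sum (index_enum 'I_n)
  (fun j w => phi (zeta j w)) (fun j => (term j).1).
have cross j l : Rintegrable Q (fun w => phi (zeta j w) * phi (zeta l w)) /\
    mean Q (fun w => phi (zeta j w) * phi (zeta l w)) =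
    if j == l then mean P (fun z => phi z ^+ 2) else 0.
  case: eqP => [<-|/eqP jl].
    have [i e] := integral_iid hz j mphi2 iphi2.
    split; first by apply: (eq_Rintegrable _ i) => w; rewrite /= expr2.
    by rewrite /mean /Rintegral -e.
  have [i e] := integral_mul_iid hz j l jl mphi mphi iphi iphi.
  by split => //; rewrite /mean /Rintegral e Ephi' mul0e.
have row j : Rintegrable Q (fun w => \sum_(l < n) phi (zeta j w) * phi (zeta l w)) /\
    mean Q (fun w => \sum_(l < n) phi (zeta j w) * phi (zeta l w)) =
    mean P (fun z => phi z ^+ 2).
  have [i e] := Rintegrable_mean_sum (index_enum 'I_n)
    (fun l w => phi (zeta j w) * phi (zeta l w)) (fun l => (cross j l).1).
  split => //; rewrite e (bigD1 j) //= (cross j j).2 eqxx big1 ?addr0 // => l lj.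
  by rewrite (cross j l).2 eq_sym (negbTE lj).
have [iX2 EX2] := Rintegrable_mean_sum (index_enum 'I_n)
  (fun j w => \sum_(l < n) phi (zeta j w) * phi (zeta l w)) (fun j => (row j).1).
have sqrE w : (\sum_(j < n) phi (zeta j w)) ^+ 2 =
    \sum_(j < n) \sum_(l < n) phi (zeta j w) * phi (zeta l w).
  by rewrite expr2 mulr_suml; apply: eq_bigr => j _; rewrite mulr_sumr.
split => //.
- by rewrite EX big1 // => j _; exact: (term j).2.
- by apply: (eq_Rintegrable _ iX2) => w; rewrite sqrE.
rewrite (eq_mean _ sqrE) EX2.
under eq_bigr do rewrite (row _).2.
by rewrite sumr_const card_ord mulr_natl.
Qed.

End iid_centered_sum.

Lemma measurable_wrt_gen_sigma_sum {dW} {W : measurableType dW} {dZ}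
  {Z : measurableType dZ} {R : realType} {n : nat} (zeta : 'I_n -> W -> Z)
  (mz : forall j, measurable_fun setT (zeta j))
  (phi : Z -> R) (mphi : measurable_fun setT phi) :
  measurable_wrt (gen_sigma zeta) (fun w => \sum_(j < n) phi (zeta j w)).
Proof.
pose Wz := g_sigma_algebraType
  (\bigcup_(j in [set: 'I_n]) preimage_set_system setT (zeta j) measurable).
have mzj j : measurable_fun (setT : set Wz) (zeta j : Wz -> Z).
  by move=> _ Y mY; apply: sub_sigma_algebra; exists j => //; exists Y.
have msum : measurable_fun (setT : set Wz) (fun w : Wz => \sum_(j < n) phi (zeta j w)).
  by apply: measurable_sum => j; exact: measurableT_comp.
by move=> V mV; have := msum measurableT V mV; rewrite setTI.
Qed.

Lemma measurable_wrt_comp {W : Type} {R : realType} (F : set (set W)) (f : W -> R)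
  (a : R -> R) : measurable_wrt F f -> measurable_fun setT a ->
  measurable_wrt F (a \o f).
Proof.
move=> hf ma V mV; rewrite comp_preimage; apply: hf.
by rewrite -[_ @^-1` _]setTI; exact: ma.
Qed.

Section stochastic_oracle.
Context {R : realType} {p : nat} {dZ : measure_display} {Z : measurableType dZ}
  {P : probability Z R} {Gs : 'rV[R]_p -> Z -> 'rV[R]_p} {G : 'rV[R]_p -> 'rV[R]_p}
  {L : R}.
Hypothesis Gs_int : forall x i, P.-integrable setT (fun z => (Gs x z ord0 i)%:E).
Hypothesis G_mean : forall x i, G x ord0 i = \int[P]_z Gs x z ord0 i.
Hypothesis Gs_lipschitz : forall x y,
  (\int[P]_z (sqnorm (Gs x z - Gs y z))%:E <= (L ^+ 2 * sqnorm (x - y))%:E)%E.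

(* Coordinate [i] of the contribution of one sample [z] of the batch [B_k] to the
   error of ~S^k, with [y1, y2, y3] standing for x^k, x^{k-1}, x^{k-2}. *)
Definition centered_increment (c : R) (y1 y2 y3 : 'rV[R]_p) (i : 'I_p) (z : Z) : R :=
  c * (2 * (Gs y1 z ord0 i - G y1 ord0 i) - 3 * (Gs y2 z ord0 i - G y2 ord0 i)
       + (Gs y3 z ord0 i - G y3 ord0 i)).

Lemma Gs_Rintegrable x i : Rintegrable P (fun z => Gs x z ord0 i).
Proof. exact: Gs_int. Qed.

Lemma Gs_measurable x i : measurable_fun setT (fun z => Gs x z ord0 i).
Proof. exact: Rintegrable_measurable (Gs_Rintegrable x i). Qed.

Lemma mean_Gs_centered x i : mean P (fun z => Gs x z ord0 i - G x ord0 i) = 0.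
Proof.
rewrite meanB ?mean_cst; [|exact: Gs_Rintegrable|exact: Rintegrable_cst].
by rewrite G_mean subrr.
Qed.

Lemma sqnorm_Gs_sub_Rintegrable x y :
  Rintegrable P (fun z => sqnorm (Gs x z - Gs y z)).
Proof.
apply: ge0_Rintegrable.
- rewrite /sqnorm; apply: measurable_sum => i /=.
  under eq_fun do rewrite !mxE.
  by apply: measurable_funX; apply: measurable_funB; exact: Gs_measurable.
- by move=> z; rewrite /sqnorm; apply: sumr_ge0 => j _; exact: sqr_ge0.
- by apply: le_lt_trans (Gs_lipschitz x y) _; exact: ltry.
Qed.

Lemma sqr_Gs_sub_Rintegrable x y i :
  Rintegrable P (fun z => (Gs x z ord0 i - Gs y z ord0 i) ^+ 2).
Proof.
apply: (le_Rintegrable _ _ (sqnorm_Gs_sub_Rintegrable x y)).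
  by apply: measurable_funX; apply: measurable_funB; exact: Gs_measurable.
move=> z; rewrite ger0_norm ?sqr_ge0 // /sqnorm (bigD1 i) //= !mxE lerDl.
by apply: sumr_ge0 => j _; exact: sqr_ge0.
Qed.

Lemma sum_mean_sqr_Gs_sub_le x y :
  \sum_(i < p) mean P (fun z => (Gs x z ord0 i - Gs y z ord0 i) ^+ 2)
  <= L ^+ 2 * sqnorm (x - y).
Proof.
have [_ <-] := Rintegrable_mean_sum (index_enum 'I_p)
  (fun i z => (Gs x z ord0 i - Gs y z ord0 i) ^+ 2) (sqr_Gs_sub_Rintegrable x y).
rewrite -lee_fin -integral_EFin_mean; last first.
  exact: (Rintegrable_mean_sum _ _ (sqr_Gs_sub_Rintegrable x y)).1.
apply: le_trans (Gs_lipschitz x y); rewrite le_eqVlt; apply/orP; left; apply/eqP.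
by apply: eq_integral => z _; congr EFin; apply: eq_bigr => i _; rewrite !mxE.
Qed.

Lemma centered_increment_moments (c : R) (y1 y2 y3 : 'rV[R]_p) (i : 'I_p) :
  let psi := centered_increment c y1 y2 y3 i in
  [/\ measurable_fun setT psi, Rintegrable P psi, mean P psi = 0,
      Rintegrable P (fun z => psi z ^+ 2) &
      mean P (fun z => psi z ^+ 2) <=
        c ^+ 2 * (8 * mean P (fun z => (Gs y1 z ord0 i - Gs y2 z ord0 i) ^+ 2)
                  + 2 * mean P (fun z => (Gs y2 z ord0 i - Gs y3 z ord0 i) ^+ 2))].
Proof.
move=> psi.
pose A y y' z := Gs y z ord0 i - Gs y' z ord0 i.
have iA y y' : Rintegrable P (A y y').
  by apply: RintegrableB; exact: Gs_Rintegrable.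
have EA y y' : mean P (A y y') = G y ord0 i - G y' ord0 i.
  by rewrite meanB ?G_mean //; exact: Gs_Rintegrable.
have [ia la] := mean_sqr_centered_le (iA y1 y2) (sqr_Gs_sub_Rintegrable y1 y2 i).
have [ib lb] := mean_sqr_centered_le (iA y2 y3) (sqr_Gs_sub_Rintegrable y2 y3 i).
rewrite !EA in ia la ib lb.
pose a z := (A y1 y2 z - (G y1 ord0 i - G y2 ord0 i)) ^+ 2.
pose b z := (A y2 y3 z - (G y2 ord0 i - G y3 ord0 i)) ^+ 2.
have psi_sqr_le z : psi z ^+ 2 <= c ^+ 2 * (8 * a z + 2 * b z).
  rewrite /psi /centered_increment /a /b /A.
  set u := Gs y1 z ord0 i - G y1 ord0 i.
  set v := Gs y2 z ord0 i - G y2 ord0 i.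
  set t := Gs y3 z ord0 i - G y3 ord0 i.
  have -> : Gs y1 z ord0 i - Gs y2 z ord0 i - (G y1 ord0 i - G y2 ord0 i) = u - v.
    by rewrite /u /v; ring.
  have -> : Gs y2 z ord0 i - Gs y3 z ord0 i - (G y2 ord0 i - G y3 ord0 i) = v - t.
    by rewrite /v /t; ring.
  have -> : (c * (2 * u - 3 * v + t)) ^+ 2 = c ^+ 2 * (2 * (u - v) - (v - t)) ^+ 2.
    by ring.
  apply: ler_wpM2l; first exact: sqr_ge0.
  have := sqr_ge0 (2 * (u - v) + (v - t)); nra.
have centered y : Rintegrable P (fun z => Gs y z ord0 i - G y ord0 i).
  by apply: RintegrableB; [exact: Gs_Rintegrable | exact: Rintegrable_cst].
have ip : Rintegrable P psi.
  rewrite /psi /centered_increment; apply: RintegrableZl; apply: RintegrableD => //.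
  by apply: RintegrableB; apply: RintegrableZl.
have mp : measurable_fun setT psi := Rintegrable_measurable ip.
have iq : Rintegrable P (fun z => c ^+ 2 * (8 * a z + 2 * b z)) by solve_Rintegrable.
have ip2 : Rintegrable P (fun z => psi z ^+ 2).
  apply: (le_Rintegrable _ _ iq); first exact: measurable_funX.
  by move=> z; rewrite ger0_norm ?sqr_ge0 // psi_sqr_le.
split => //.
- rewrite /psi /centered_increment meanZl; last first.
    by apply: RintegrableD => //; apply: RintegrableB; exact: RintegrableZl.
  rewrite meanD; [|by apply: RintegrableB; exact: RintegrableZl|exact: centered].
  rewrite (mean_Gs_centered y3) addr0 meanB; try exact: RintegrableZl.
  by rewrite !meanZl // !mean_Gs_centered !mulr0 subrr mulr0.
- have le_dominating : mean P (fun z => psi z ^+ 2) <=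
      mean P (fun z => c ^+ 2 * (8 * a z + 2 * b z)).
    by apply: le_Rintegral => // z _; exact: psi_sqr_le.
  apply: le_trans le_dominating _.
  rewrite meanZl; last by solve_Rintegrable.
  rewrite meanD; try solve_Rintegrable.
  rewrite !meanZl //; apply: ler_wpM2l; first exact: sqr_ge0.
  by apply: lerD; apply: ler_wpM2l.
Qed.

Lemma sum_mean_sqr_centered_increment_le (c : R) (y1 y2 y3 : 'rV[R]_p) :
  \sum_(i < p) mean P (fun z => centered_increment c y1 y2 y3 i z ^+ 2)
  <= c ^+ 2 * (8 * (L ^+ 2 * sqnorm (y1 - y2)) + 2 * (L ^+ 2 * sqnorm (y2 - y3))).
Proof.
apply: (@le_trans _ _ (\sum_(i < p) c ^+ 2 *
    (8 * mean P (fun z => (Gs y1 z ord0 i - Gs y2 z ord0 i) ^+ 2)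
     + 2 * mean P (fun z => (Gs y2 z ord0 i - Gs y3 z ord0 i) ^+ 2)))).
  by apply: ler_sum => i _; case: (centered_increment_moments c y1 y2 y3 i).
rewrite -mulr_sumr; apply: ler_wpM2l; first exact: sqr_ge0.
rewrite big_split /= -!mulr_sumr.
by apply: lerD; apply: ler_wpM2l => //; exact: sum_mean_sqr_Gs_sub_le.
Qed.

End stochastic_oracle.
Arguments centered_increment {R p dZ Z} Gs G c y1 y2 y3 i z.

Lemma adapted_at_le {W T : Type} {m n : nat} {f : (nat -> W) -> T} :
  (m <= n)%N -> adapted_at m f -> adapted_at n f.
Proof. by move=> mn fm h h' eqh; apply: fm => j jm; apply: eqh; exact: leq_trans mn. Qed.

Lemma adapted_at_upd {W T : Type} {m k : nat} {f : (nat -> W) -> T} {h w} :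
  (m <= k)%N -> adapted_at m f -> f (upd h k w) = f h.
Proof.
by move=> mk fm; apply: fm => j jm; rewrite /upd (ltn_eqF (leq_trans jm mk)).
Qed.

Lemma integral_sum_sqr {d} {T : measurableType d} {R : realType} (mu : measure T R)
  {p : nat} (f : 'I_p -> T -> R) : (forall i, measurable_fun setT (f i)) ->
  (\int[mu]_t (\sum_(i < p) f i t ^+ 2)%:E =
   \sum_(i < p) \int[mu]_t (f i t ^+ 2)%:E)%E.
Proof.
move=> mf; under eq_integral do rewrite -sumEFin.
rewrite ge0_integral_sum // => [i|i t _]; last by rewrite lee_fin sqr_ge0.
by apply/measurable_EFinP; exact: measurable_funX.
Qed.

Section recursive_variance_reduction.
Context {R : realType} {p : nat} {dZ : measure_display} {Z : measurableType dZ}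
  {P : probability Z R} {Gs : 'rV[R]_p -> Z -> 'rV[R]_p} {G : 'rV[R]_p -> 'rV[R]_p}
  {L : R} {dW : measure_display} {W : measurableType dW} {Q : probability W R}
  {b bh : nat} {zeta : 'I_b -> W -> Z} {zetah : 'I_bh -> W -> Z} {om C : R}
  {Sbar x : nat -> (nat -> W) -> 'rV[R]_p}.
Hypothesis Gs_int : forall x i, P.-integrable setT (fun z => (Gs x z ord0 i)%:E).
Hypothesis G_mean : forall x i, G x ord0 i = \int[P]_z Gs x z ord0 i.
Hypothesis Gs_lipschitz : forall x y,
  (\int[P]_z (sqnorm (Gs x z - Gs y z))%:E <= (L ^+ 2 * sqnorm (x - y))%:E)%E.
Hypotheses (b_gt0 : (0 < b)%N) (zeta_iid : iid_batch Q P zeta).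
Hypothesis x_adapted : forall k, adapted_at k (x k).
Hypothesis Sbar_adapted : forall k, adapted_at k.+1 (Sbar k).
Hypothesis Sbar_built : forall k h i,
  measurable_wrt (gen_sigma zetah) (fun w => Sbar k (upd h k w) ord0 i).
Hypothesis Sbar_int : forall k h i,
  Q.-integrable setT (fun w => (Sbar k (upd h k w) ord0 i)%:E).
Hypothesis Sbar_unbiased : forall k h i,
  Ek Q k (fun h' => Sbar k h' ord0 i) h = Sk G x k h ord0 i.
Hypothesis C_indep :
  (C = 1 /\ indep_sigma Q (gen_sigma zeta) (gen_sigma zetah)) \/ C = 2.

Local Notation Stl := (Stil Gs G om zeta Sbar x).
Local Notation err k h := (Stl k h - Sk G x k h).
Local Notation prev_err k h := (match k with 0 => 0 | k'.+1 => err k' h end).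
Local Notation Sprev k h := (match k with 0 => G (x 0%N h) | k'.+1 => Stl k' h end).
Local Notation prev_Delta k h :=
  (match k with 0 => 0 | k'.+1 => sqnorm (err k' h) end).
Local Notation batch h k := (fun j => zeta j (h k)).

Lemma StilE k h : Stl k h = (1 - om) *: (Sprev k h
    + 2%:R *: GB Gs (batch h k) (x k h) - 3%:R *: GB Gs (batch h k) (x k.-1 h)
    + GB Gs (batch h k) (x k.-2 h)) + om *: Sbar k h.
Proof. by case: k. Qed.

Lemma Stil_adapted k : adapted_at k.+1 (Stl k).
Proof.
elim: k => [|k IH] h1 h2 eqh; rewrite StilE [RHS]StilE.
  by rewrite /= (x_adapted 0 h1 h2) // (eqh 0%N) // (Sbar_adapted 0 h1 h2).
have xa m : (m <= k.+1)%N -> x m h1 = x m h2.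
  by move=> mk; exact: (adapted_at_le (leqW mk) (x_adapted m) h1 h2 eqh).
rewrite /= (IH h1 h2); last by move=> j jk; apply: eqh; exact: ltnW.
rewrite (xa k.+1) // (xa k) // (xa k.-1) ?(leq_trans (leq_pred _)) //.
by rewrite (eqh k.+1) // (Sbar_adapted k.+1 h1 h2).
Qed.

Lemma prev_errE k h : prev_err k h = Sprev k h - Sk G x k.-1 h.
Proof. by case: k => [|k] //=; rewrite /Sk scaler_nat mulr2n addrK subrr. Qed.

Section iteration.
Variables (k : nat) (h : nat -> W).

Local Notation c := ((1 - om) / b%:R).
Local Notation psi i := (centered_increment Gs G c (x k h) (x k.-1 h) (x k.-2 h) i).
Local Notation X i := (fun w => \sum_(j < b) psi i (zeta j w)).
Local Notation Y i := (fun w => om * (Sbar k (upd h k w) ord0 i - Sk G x k h ord0 i)).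

Lemma x_upd w m : (m <= k)%N -> x m (upd h k w) = x m h.
Proof. by move=> mk; exact: adapted_at_upd mk (x_adapted m). Qed.

Lemma Sk_upd w : Sk G x k (upd h k w) = Sk G x k h.
Proof. by rewrite /Sk !x_upd // leq_pred. Qed.

Lemma Sprev_upd w : Sprev k (upd h k w) = Sprev k h.
Proof.
case: k x_upd => [|k'] xu /=; first by rewrite xu.
exact: adapted_at_upd (leqnn _) (Stil_adapted k').
Qed.

Lemma err_upd_decomposition w i :
  err k (upd h k w) ord0 i = (1 - om) * prev_err k h ord0 i + X i w + Y i w.
Proof.
rewrite Sk_upd StilE Sprev_upd /upd eqxx -/(upd h k w).
rewrite !x_upd ?leq_pred ?(leq_trans (leq_pred _) (leq_pred _)) //.
rewrite prev_errE /centered_increment -mulr_sumr /GB.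
rewrite !mxE !summxE ?mxE.
rewrite !big_split /= sumrN -!mulr_sumr !sumrB !sumr_const card_ord.
set bb := b%:R; have nb (y : R) : y *+ b = y * bb by rewrite mulr_natr.
by rewrite !nb; field; rewrite /bb pnatr_eq0 -lt0n.
Qed.

Lemma batch_sum_moments i :
  [/\ Rintegrable Q (X i), mean Q (X i) = 0, Rintegrable Q (fun w => X i w ^+ 2) &
      mean Q (fun w => X i w ^+ 2) = b%:R * mean P (fun z => psi i z ^+ 2)].
Proof.
have [mp ip Ep ip2 _] := centered_increment_moments Gs_int G_mean Gs_lipschitz
  c (x k h) (x k.-1 h) (x k.-2 h) i.
exact (iid_centered_sum_moments zeta_iid mp ip ip2 Ep).
Qed.

Lemma fresh_deviation_moments i : Rintegrable Q (Y i) /\ mean Q (Y i) = 0.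
Proof.
have iS : Rintegrable Q (fun w => Sbar k (upd h k w) ord0 i) := Sbar_int k h i.
have iSS : Rintegrable Q (fun w => Sbar k (upd h k w) ord0 i - Sk G x k h ord0 i).
  by apply: RintegrableB => //; exact: Rintegrable_cst.
split; first exact: RintegrableZl.
rewrite meanZl // meanB //; last exact: Rintegrable_cst.
have -> : mean Q (fun w => Sbar k (upd h k w) ord0 i) = Sk G x k h ord0 i.
  exact: Sbar_unbiased.
by rewrite mean_cst subrr mulr0.
Qed.

Lemma err_unbiased i :
  Rintegrable Q (fun w => err k (upd h k w) ord0 i) /\
  mean Q (fun w => err k (upd h k w) ord0 i) = (1 - om) * prev_err k h ord0 i.
Proof.
have [iX EX _ _] := batch_sum_moments i; have [iY EY] := fresh_deviation_moments i.
have iT : Rintegrable Q (fun w => (1 - om) * prev_err k h ord0 i + X i w + Y i w).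
  by solve_Rintegrable.
split; first by apply: (eq_Rintegrable _ iT) => w; rewrite err_upd_decomposition.
rewrite (eq_mean _ (err_upd_decomposition ^~ i)) !meanD; try solve_Rintegrable.
by rewrite mean_cst EX EY !addr0.
Qed.

Lemma deviation_measurable i :
  measurable_fun setT (fun w => (Sbar k (upd h k w) - Sk G x k h) ord0 i).
Proof.
apply: (eq_measurable_fun (fun w => Sbar k (upd h k w) ord0 i - Sk G x k h ord0 i)).
  by move=> w _; rewrite !mxE.
apply: measurable_funB; last exact: measurable_cst.
exact: Rintegrable_measurable (Sbar_int k h i).
Qed.

Lemma coordinate_second_moment_le i :
  (\int[Q]_w ((err k (upd h k w) ord0 i) ^+ 2)%:E <=
   (((1 - om) * prev_err k h ord0 i) ^+ 2 + C * mean Q (fun w => X i w ^+ 2))%:E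
   + (C * om ^+ 2)%:E *
     \int[Q]_w (((Sbar k (upd h k w) - Sk G x k h) ord0 i) ^+ 2)%:E)%E.
Proof.
have [mp _ _ _ _] := centered_increment_moments Gs_int G_mean Gs_lipschitz
  c (x k h) (x k.-1 h) (x k.-2 h) i.
have [iX EX iX2 _] := batch_sum_moments i; have [iY EY] := fresh_deviation_moments i.
under eq_integral do rewrite err_upd_decomposition.
apply: le_trans (mean_sqr_add_centered_le _ C _ _ iX iX2 EX iY EY _) _.
  case: C_indep => [[C1 indep]|C2]; [left|by right]; split => // A B mA mB.
  apply: indep.
    exact: measurable_wrt_gen_sigma_sum (iid_batch_measurable zeta_iid) _ mp _ mA.
  apply: (@measurable_wrt_comp _ _ _ (fun w => Sbar k (upd h k w) ord0 i)
      (fun s => om * (s - Sk G x k h ord0 i))) => //.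
  apply: measurable_funM; first exact: measurable_cst.
  by apply: measurable_funB; [exact: measurable_id | exact: measurable_cst].
have mdev := deviation_measurable i.
have Y_sqr : (\int[Q]_w (Y i w ^+ 2)%:E = (om ^+ 2)%:E *
    \int[Q]_w (((Sbar k (upd h k w) - Sk G x k h) ord0 i) ^+ 2)%:E)%E.
  rewrite -ge0_integralZl_EFin //; last 3 first.
  - by move=> w _; rewrite lee_fin sqr_ge0.
  - by apply/measurable_EFinP; exact: measurable_funX.
  - exact: sqr_ge0.
  by apply: eq_integral => w _; rewrite exprMn EFinM !mxE.
by rewrite Y_sqr muleA -EFinM.
Qed.

Lemma err_second_moment_le :
  (Ek_nn Q k (fun h' => sqnorm (err k h')) h <=
   ((1 - om * (2 - om)) * prev_Delta k h
    + 8%:R * C * (1 - om) ^+ 2 * L ^+ 2 / b%:R * sqnorm (x k h - x k.-1 h)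
    + 2%:R * C * (1 - om) ^+ 2 * L ^+ 2 / b%:R * sqnorm (x k.-1 h - x k.-2 h))%:E
   + (C * om ^+ 2)%:E * Ek_nn Q k (fun h' => sqnorm (Sbar k h' - Sk G x k h')) h)%E.
Proof.
have C_ge0 : 0 <= C by case: C_indep => [[-> _]|->].
rewrite /Ek_nn [in leRHS](eq_integral
  (fun w => (sqnorm (Sbar k (upd h k w) - Sk G x k h))%:E)); last first.
  by move=> w _; rewrite Sk_upd.
rewrite (integral_sum_sqr Q (fun i w => err k (upd h k w) ord0 i)); last first.
  by move=> i; exact: Rintegrable_measurable (err_unbiased i).1.
rewrite (integral_sum_sqr Q (fun i w => (Sbar k (upd h k w) - Sk G x k h) ord0 i));
  last exact: deviation_measurable.
apply: le_trans; first by apply: lee_sum => i _; exact: coordinate_second_moment_le.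
rewrite big_split /= sumEFin -ge0_sume_distrr; last first.
  by move=> i _; apply: integral_ge0 => w _; rewrite lee_fin sqr_ge0.
apply: leeD => //; rewrite lee_fin big_split /=.
have damped_err : \sum_(i < p) ((1 - om) * prev_err k h ord0 i) ^+ 2 =
    (1 - om * (2 - om)) * prev_Delta k h.
  have -> : prev_Delta k h = sqnorm (prev_err k h).
    by case: (k) => [|k'] //=; rewrite /sqnorm big1 // => i _; rewrite mxE expr0n.
  rewrite /sqnorm mulr_sumr; apply: eq_bigr => i _.
  by rewrite exprMn; congr (_ * _); ring.
have batch_sum : \sum_(i < p) C * mean Q (fun w => X i w ^+ 2) =
    C * b%:R * \sum_(i < p) mean P (fun z => psi i z ^+ 2).
  rewrite -mulrA !mulr_sumr; apply: eq_bigr => i _.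
  by have [_ _ _ ->] := batch_sum_moments i; rewrite mulrA.
rewrite damped_err batch_sum -[leRHS]addrA lerD2l.
apply: le_trans.
  apply: ler_wpM2l; first exact: mulr_ge0.
  exact: (sum_mean_sqr_centered_increment_le Gs_int G_mean Gs_lipschitz).
rewrite le_eqVlt; apply/orP; left; apply/eqP.
by field; rewrite pnatr_eq0 -lt0n.
Qed.

End iteration.

End recursive_variance_reduction.

Theorem mainTheorem8
  (R : realType) (p : nat)
  (dZ : measure_display) (Z : measurableType dZ) (P : probability Z R)
  (Gs : 'rV[R]_p -> Z -> 'rV[R]_p) (G : 'rV[R]_p -> 'rV[R]_p)
  (sigma L : R)
  (* setting (E): G x = E_zeta[ Gs(x, zeta) ] *)
  (hGs_int : forall x i, P.-integrable setT (fun z => (Gs x z ord0 i)%:E))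
  (hE : forall x i, G x ord0 i = Rintegral P setT (fun z => Gs x z ord0 i))
  (* Assumption A(b) *)
  (hAb : forall x, (\int[P]_z (sqnorm (Gs x z - G x))%:E <= (sigma ^+ 2)%:E)%E)
  (* Assumption A(c) *)
  (hAc : forall x y,
     (\int[P]_z (sqnorm (Gs x z - Gs y z))%:E <= (L ^+ 2 * sqnorm (x - y))%:E)%E)
  (* the scheme VrFRBS *)
  (eta : R) (heta : 0 < eta) (T : 'rV[R]_p -> set 'rV[R]_p)
  (x0 xi0 : 'rV[R]_p) (hxi0 : T x0 xi0)
  (* fresh randomness of one iteration: space W with law Q; a run is h : nat -> W *)
  (dW : measure_display) (W : measurableType dW) (Q : probability W R)
  (b bh : nat) (hb : (0 < b)%N) (hbh : (0 < bh)%N)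
  (zeta : 'I_b -> W -> Z) (zetah : 'I_bh -> W -> Z)
  (hzeta : iid_batch Q P zeta) (hzetah : iid_batch Q P zetah)
  (om : R) (hom : 0 < om <= 1)
  (Sbar : nat -> (nat -> W) -> 'rV[R]_p)
  (x : nat -> (nat -> W) -> 'rV[R]_p)
  (hx0 : forall h, x 0%N h = x0)
  (hx_adapt : forall k, adapted_at k (x k))
  (hx_step : forall k h,
     in_resolvent eta T (x k h - eta *: Stil Gs G om zeta Sbar x k h) (x k.+1 h))
  (* Sbar^k depends on the past and on the fresh mini-batch ^B_k only *)
  (hSbar_adapt : forall k, adapted_at k.+1 (Sbar k))
  (hSbar_built : forall k h i,
     measurable_wrt (gen_sigma zetah) (fun w => Sbar k (upd h k w) ord0 i))
  (hSbar_meas : forall k h i, measurable_fun setT (fun w => Sbar k (upd h k w) ord0 i))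
  (* E_{^B_k}[Sbar^k] = S^k *)
  (hSbar_int : forall k h i,
     Q.-integrable setT (fun w => (Sbar k (upd h k w) ord0 i)%:E))
  (hSbar_unb : forall k h i,
     Ek Q k (fun h' => Sbar k h' ord0 i) h = Sk G x k h ord0 i)
  (C : R)
  (hC : (C = 1 /\ indep_sigma Q (gen_sigma zeta) (gen_sigma zetah)) \/ C = 2) :
  let Stl := Stil Gs G om zeta Sbar x in
  let e := fun k h => Stl k h - Sk G x k h in
  let e_prev := fun k h => match k with 0 => 0 | k'.+1 => e k' h end in
  let Delta := fun k h => sqnorm (e k h) in
  let Delta_prev := fun k h => match k with 0 => 0 | k'.+1 => Delta k' h end in
  let sigma2 := fun k h => Ek_nn Q k (fun h' => sqnorm (Sbar k h' - Sk G x k h')) h in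
  let tau := om in
  let kappa := om * (2 - om) in
  let Theta := 8%:R * C * (1 - om) ^+ 2 * L ^+ 2 / b%:R in
  let Thetah := 2%:R * C * (1 - om) ^+ 2 * L ^+ 2 / b%:R in
  let delta := fun k h => ((C * om ^+ 2)%:E * sigma2 k h)%E in
  [/\ 0 < tau <= 1, 0 < kappa <= 1, 0 <= Theta, 0 <= Thetah &
  forall k h,
    [/\ forall i, Q.-integrable setT (fun w => (e k (upd h k w) ord0 i)%:E)
                  /\ Ek Q k (fun h' => e k h' ord0 i) h = (1 - tau) * e_prev k h ord0 i,
        (Ek_nn Q k (fun h' => sqnorm (e k h')) h <= Ek_nn Q k (Delta k) h)%E &
        (Ek_nn Q k (Delta k) h <=
           ((1 - kappa) * Delta_prev k h
            + Theta * sqnorm (x k h - x k.-1 h)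
            + Thetah * sqnorm (x k.-1 h - x k.-2 h))%:E + delta k h)%E]].
Proof.
move=> Stl e e_prev Delta Delta_prev sigma2 tau kappa Theta Thetah delta.
have [om_gt0 om_le1] := andP hom.
have C_ge0 : 0 <= C by case: hC => [[-> _]|->].
have Theta_ge0 (n : nat) : 0 <= n%:R * C * (1 - om) ^+ 2 * L ^+ 2 / b%:R.
  apply: divr_ge0; last exact: ler0n.
  by rewrite mulr_ge0 ?sqr_ge0 // mulr_ge0 ?sqr_ge0 // mulr_ge0 ?ler0n.
split; [exact: hom | by rewrite /kappa; apply/andP; split; nra | exact: Theta_ge0
      | exact: Theta_ge0 | ].
move=> k h; split.
- exact: err_unbiased hGs_int hE hAc hb hzeta hx_adapt hSbar_adapt hSbar_int
    hSbar_unb k h.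
- exact: lexx.
- exact: err_second_moment_le hGs_int hE hAc hb hzeta hx_adapt hSbar_adapt
    hSbar_built hSbar_int hSbar_unb hC k h.
Qed.
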